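(* Under the hypotheses of the context, let $U$ be an integer with $U\delta\ge\bot_0+D+1$. Then for every process $p$, in the configuration $\gamma_{t_{p,U\delta+\varrho}}$ (i.e., at $p$'s event in the cut $C_{U\delta+\varrho}$), $p.v_2=\bigoplus\{q.v_0: q\in V(p,\varrho)\}$, the infimum of the registers $v_0$ over the $\varrho$-ball centered at $p$.
   Context: Let $G=(V,E)$ be a finite connected undirected graph, $|V|=n\ge 2$, $\mathcal N_p$ the set of neighbors of $p$, $d(p,q)$ the hop distance, $D$ the diameter, and $V(p,r)=\{q\in V: d(p,q)\le r\}$. Fix integers $\varrho\ge1$, $\delta=\varrho+1$, and $M\ge3$ a multiple of $\delta$; for an integer $a$, $\bar a\in\{0,\dots,M-1\}$ is its residue modulo $M$. Each process $p$ holds a clock $p.r\in\{0,\dots,M-1\}$; $p^t.r$ is its value in $\gamma_t$. Integers $a,b$ are locally comparable if $\min(\overline{a-b},\overline{b-a})\le1$, and then $b\ominus a=\overline{b-a}$ if $\overline{b-a}\le1$, else $-\overline{a-b}$. $WU$: for every edge $\{p,q\}$, $p.r,q.r$ are locally comparable. The delay of a path $p_0\ldots p_k$ is $\sum_{i<k}(p_{i+1}.r\ominus p_i.r)$. $WU_0$: $WU$ holds and all paths between any $p,q$ have the same delay $\delta_{(p,q)}$ ($\delta^t_{(p,q)}$ in $\gamma_t$). Let $\oplus$ be an associative, commutative, idempotent binary operation on a set $\mathbb S$; $\bigoplus$ of a finite nonempty set is the $\oplus$ of its elements. Each process $p$ has registers $p.v_0,p.v_1,p.v_2\in\mathbb S$,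 where $p.v_0$ is never modified. Dynamics: $p$ is enabled iff for every $q\in\mathcal N_p$, $q.r=p.r$ or $q.r=\overline{p.r+1}$. In a transition $\gamma_t\to\gamma_{t+1}$ a nonempty set of processes enabled in $\gamma_t$ is chosen (by an arbitrary daemon); each chosen $p$, reading the values of $\gamma_t$, does: if $p.r\equiv\varrho \pmod\delta$ then $p.v_1:=p.v_0$, $p.v_2:=p.v_0$; otherwise $p.v_1:=p.v_2$ and $p.v_2:=p.v_0\oplus\bigoplus\{q.v_{\omega(q)}:q\in\mathcal N_p\}$, where $\omega(q)=2$ if $q.r=p.r$ and $\omega(q)=1$ if $q.r=\overline{p.r+1}$; then $p.r:=\overline{p.r+1}$. Other processes are unchanged. Standing hypotheses: the execution $\gamma_0\gamma_1\ldots$ is infinite, $\gamma_0$ satisfies $WU_0$, and every process increments its clock infinitely often. Lifting: choose $p_0$ with $\delta^0_{(p_0,q)}\ge0$ for all $q$, let $\bot_0=p_0^0.r$, set $\widetilde{p^0.r}=\bot_0+\delta^0_{(p_0,p)}$, and $\widetilde{p^{t+1}.r}=\widetilde{p^t.r}+1$ if $p$ increments in $\gamma_t\to\gamma_{t+1}$, else $\widetilde{p^{t+1}.r}=\widetilde{p^t.r}$. For an integer $k$, $t_{p,k}$ is the smallest $t$ with $\widetilde{p^t.r}=k$, and $C_k=\{(p,t_{p,k}):p\in V\}$. *)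

From HB Require Import structures.
From mathcomp Require Import all_boot all_order all_algebra.
Set Implicit Arguments. Unset Strict Implicit. Unset Printing Implicit Defensive.
Import Order.TTheory GRing.Theory Num.Theory.

(* [inball e r p q] : there is a walk p = p_0 ... p_k = q with k <= r,
   i.e. d(p,q) <= r, i.e. q \in V(p,r). *)
Definition inball (V : finType) (e : rel V) (r : nat) (p q : V) : bool :=
  [exists k : 'I_r.+1, [exists s : k.-tuple V, path e p s && (last p s == q)]].

Definition is_diameter (V : finType) (e : rel V) (D : nat) : Prop :=
  (forall p q, inball e D p q) /\
  (forall D', (forall p q, inball e D' p q) -> D <= D').

Definition resM (M : nat) (a : int) : nat := `|(a %% Posz M)%Z|%N.

Definition loc_comparable (M : nat) (a b : int) : bool :=
  (minn (resM M (a - b)%R) (resM M (b - a)%R) <= 1)%N.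

Definition ominus (M : nat) (b a : int) : int :=
  if (resM M (b - a)%R <= 1)%N then Posz (resM M (b - a)%R) else (- Posz (resM M (a - b)%R))%R.

Record conf (V : Type) (S : Type) := Conf {
  cr : V -> nat;
  cv1 : V -> S;
  cv2 : V -> S
}.

Fixpoint delay (M : nat) (V : Type) (r : V -> nat) (p : V) (s : seq V) : int :=
  match s with
  | [::] => 0%R
  | q :: s' => (ominus M (Posz (r q)) (Posz (r p)) + delay M r q s')%R
  end.

Definition WU (M : nat) (V : finType) (e : rel V) (r : V -> nat) : Prop :=
  forall p q, e p q -> loc_comparable M (Posz (r p)) (Posz (r q)).

Definition WU0 (M : nat) (V : finType) (e : rel V) (r : V -> nat) : Prop :=
  WU M e r /\
  forall p s1 s2, path e p s1 -> path e p s2 -> last p s1 = last p s2 ->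
    delay M r p s1 = delay M r p s2.

Definition enabled (M : nat) (V : finType) (e : rel V) (r : V -> nat) (p : V) : bool :=
  [forall q, e p q ==> ((r q == r p) || (r q == (r p).+1 %% M))].

Definition step (M rho : nat) (V : finType) (e : rel V) (S : Type)
    (op : S -> S -> S) (v0 : V -> S) (ch : {set V}) (c : conf V S) : conf V S :=
  let r := cr c in
  let vom q p := (* q.v_{omega(q)} as seen by p *)
    if r q == r p then cv2 c q else cv1 c q in
  Conf
    (fun p => if p \in ch then (r p).+1 %% M else r p)
    (fun p => if p \in ch then
                (if r p %% rho.+1 == rho then v0 p else cv2 c p)
              else cv1 c p)
    (fun p => if p \in ch then
                (if r p %% rho.+1 == rho then v0 p
                 else foldr op (v0 p) [seq vom q p | q <- enum (e p)])
              else cv2 c p).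

From HB Require Import structures.
From mathcomp Require Import all_boot all_order all_algebra.
From mathcomp Require Import zify.
Import Order.TTheory GRing.Theory Num.Theory.

Set Implicit Arguments.
Unset Strict Implicit.
Unset Printing Implicit Defensive.

(* Infima are taken in [option S] under [oAC op], an idempotent commutative
   monoid whose unit [None] stands for the empty infimum.  Write [lift t q]
   for the lifted clock of q at time t (it is a natural number by the choice
   of p0).  The proof has three steps.
   1. Clock structure: the actual clock is [lift mod M], and lifted clocks of
      neighbours differ by at most one (initially because a path of length k
      has delay at most k; afterwards because a process only moves when its
      neighbours are level with it or one ahead).  Hence when q moves, each
      neighbour x has [lift x = lift q + (clock x != clock q)].
   2. Register invariant: let N = U(rho+1); every initial lifted clock is at
      most bot0 + D < N.  While N <= lift q <= N + rho, v2 of q is the infimum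
      over V(q, lift q - N) and v1 the one over the ball of radius one less.
      The move from N-1 to N is a reset (phase rho); a later move reads, from
      each neighbour, v2 if it is level and v1 if it is one ahead, i.e. always
      the ball of radius j, and V(q, j+1) = {q} U (union of V(x, j), x ~ q).
   3. At time t the lifted clock of p is N + rho, so v2 is the infimum over
      V(p, rho). *)

Section Semilattice.
Variables (S : Type) (op : S -> S -> S).
Hypotheses (opA : associative op) (opC : commutative op) (opI : idempotent_op op).
Local Notation oop := (oAC opA opC).

Lemma oAC_idem : idempotent_op oop.
Proof. by case=> // x; rewrite oACE opI. Qed.

Lemma oAC_assoc : associative oop. Proof. exact: Monoid.mulmA. Qed.
Lemma oAC_comm : commutative oop. Proof. exact: Monoid.mulmC. Qed.

Variables (I : finType) (F : I -> option S).

Lemma big_oAC_sub (P Q : pred I) : (forall i, Q i -> P i) ->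
  oop (\big[oop/None]_(i | P i) F i) (\big[oop/None]_(i | Q i) F i)
  = \big[oop/None]_(i | P i) F i.
Proof.
move=> QP; rewrite [X in oop _ X](eq_bigl (fun i => P i && Q i)); last first.
  by move=> i; apply/idP/andP => [Qi|[]//]; split => //; exact: QP.
by rewrite (bigID_idem _ _ Q) //= oAC_comm oAC_assoc oAC_idem.
Qed.

(* By idempotence, an infimum over a union splits even if the parts overlap. *)
Lemma big_oAC_union (P Q : pred I) :
  \big[oop/None]_(i | P i || Q i) F i =
  oop (\big[oop/None]_(i | P i) F i) (\big[oop/None]_(i | Q i) F i).
Proof.
rewrite (bigID_idem _ _ P) //= (eq_bigl P); last first.
  by move=> i /=; case: (P i); rewrite ?andbF.
rewrite [in X in _ = oop _ X](bigID_idem _ _ P) //= oAC_assoc.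
rewrite [in RHS]big_oAC_sub; last by move=> i /andP[].
by congr oop; apply: eq_bigl => i /=; case: (P i); rewrite ?andbF.
Qed.

Lemma big_oAC_has (T : Type) (R : T -> pred I) (s : seq T) :
  \big[oop/None]_(i | has (R^~ i) s) F i =
  \big[oop/None]_(x <- s) \big[oop/None]_(i | R x i) F i.
Proof.
elim: s => [|x s IH] /=; first by rewrite big_nil big_pred0.
by rewrite big_cons big_oAC_union IH.
Qed.
End Semilattice.

Section Balls.
Variables (V : finType) (e : rel V).

Lemma inballP r p q :
  reflect (exists s, [/\ path e p s, last p s = q & size s <= r])
          (inball e r p q).
Proof.
apply: (iffP existsP) => [[k /existsP[s /andP[ps /eqP <-]]]|[s [ps <- size_s]]].
  by exists s; split => //; rewrite size_tuple -ltnS.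
exists (Ordinal (size_s : size s < r.+1)); apply/existsP; exists (in_tuple s).
by rewrite /= ps eqxx.
Qed.

Lemma inball0 p q : inball e 0 p q = (q == p).
Proof.
by apply/inballP/eqP => [[[|x s] [_ <-]]|->] //; exists [::].
Qed.

Lemma inballS r p q :
  inball e r.+1 p q = (q == p) || has (fun x => inball e r x q) (enum (e p)).
Proof.
apply/inballP/orP => [[[|x s] [/= pxs <- size_s]]|].
- by left.
- case/andP: pxs => px xs; right; apply/hasP; exists x; first by rewrite mem_enum.
  by apply/inballP; exists s.
- case=> [/eqP ->|/hasP[x]]; first by exists [::].
  rewrite mem_enum => px /inballP[s [xs <- size_s]].
  by exists (x :: s); split => //=; rewrite xs andbT; exact: px.
Qed.

Variables (S : Type) (op : S -> S -> S).
Hypotheses (opA : associative op) (opC : commutative op) (opI : idempotent_op op).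
Local Notation oop := (oAC opA opC).
Variable v0 : V -> S.

Definition ball_inf (j : nat) (q : V) : option S :=
  \big[oop/None]_(y | inball e j q y) Some (v0 y).

Lemma ball_inf0 q : ball_inf 0 q = Some (v0 q).
Proof.
by rewrite /ball_inf (eq_bigl (pred1 q)) ?big_pred1_eq // => y; rewrite inball0.
Qed.

Lemma ball_infS j q :
  ball_inf j.+1 q =
  oop (\big[oop/None]_(x <- enum (e q)) ball_inf j x) (Some (v0 q)).
Proof.
rewrite /ball_inf (eq_bigl _ _ (inballS j q)) big_oAC_union // big_oAC_has //.
by rewrite big_pred1_eq oAC_comm.
Qed.
End Balls.

(* The local update [v0 p (+) ... (+) f x (+) ...] of the algorithm, read in
   [option S]. *)
Lemma some_foldr_map (S T : Type) (op : S -> S -> S)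
    (opA : associative op) (opC : commutative op) (a : S) (f : T -> S) (s : seq T) :
  Some (foldr op a [seq f x | x <- s]) =
  oAC opA opC (\big[oAC opA opC/None]_(x <- s) Some (f x)) (Some a).
Proof. by rewrite foldrE big_map some_big_AC_mk_monoid. Qed.

Section Delays.
Local Open Scope ring_scope.
Variables (M : nat) (V : Type) (r : V -> nat).

Lemma ominus_le1 b a : ominus M b a <= 1.
Proof.
rewrite /ominus; case: ifP => [le1|_]; first by rewrite lez_nat.
by apply: (le_trans (y := 0)); rewrite ?oppr_le0.
Qed.

Lemma delay_le_size p s : delay M r p s <= Posz (size s).
Proof.
elim: s p => [|x s IH] p //=.
by rewrite -addn1 PoszD addrC lerD // ominus_le1.
Qed.

Lemma delay_rcons p s x :
  delay M r p (rcons s x) =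
  delay M r p s + ominus M (Posz (r x)) (Posz (r (last p s))).
Proof.
elim: s p => [|y s IH] p /=; first by rewrite addr0 add0r.
by rewrite IH addrA.
Qed.

Hypothesis M_gt0 : (0 < M)%N.

Lemma resME a : Posz (resM M a) = (a %% Posz M)%Z.
Proof. by rewrite /resM gez0_abs // modz_ge0 // -lt0n. Qed.

Lemma ominus_mod b a : ((a + ominus M b a) %% Posz M)%Z = (b %% Posz M)%Z.
Proof.
rewrite /ominus; case: ifP => _; rewrite resME.
  by rewrite modzDmr addrC subrK.
by rewrite -modzDmr modzNm modzDmr opprB addrC subrK.
Qed.

Lemma delay_mod p s :
  ((Posz (r p) + delay M r p s) %% Posz M)%Z = (Posz (r (last p s)) %% Posz M)%Z.
Proof.
elim: s p => [|x s IH] p /=; first by rewrite addr0.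
by rewrite addrA -modzDml ominus_mod modzDml IH.
Qed.
End Delays.

Lemma modn_add_neq M m k : 0 < k < M -> (m + k) %% M != m %% M.
Proof.
case/andP=> k_gt0 k_ltM; rewrite -[m in _ != m %% M]addn0 eqn_modDl.
by rewrite mod0n modn_small // -lt0n.
Qed.

(* Two integers at distance at most 1 whose residues satisfy the enabledness
   test "equal or one more" differ exactly by whether their residues differ. *)
Lemma succ_residue M a b : 2 < M -> b <= a.+1 -> a <= b.+1 ->
    (b %% M == a %% M) || (b %% M == (a %% M).+1 %% M) ->
  b = a + (b %% M != a %% M).
Proof.
move=> M_gt2 le_ba le_ab; rewrite -addn1 modnDml addn1.
case: (ltngtP a b) => [lt_ab|lt_ba|<-]; last by rewrite eqxx addn0.
- have -> : b = a.+1 by apply/eqP; rewrite eqn_leq le_ba lt_ab.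
  by rewrite -addn1 modn_add_neq // (leq_trans _ M_gt2).
- have -> : a = b.+1 by apply/eqP; rewrite eqn_leq le_ab lt_ba.
  have neq1 := @modn_add_neq M b 1 (ltnW M_gt2).
  have neq2 := @modn_add_neq M b 2 M_gt2.
  rewrite addn1 in neq1; rewrite addn2 in neq2.
  by rewrite !(eq_sym (b %% M)) (negbTE neq1) (negbTE neq2).
Qed.

Lemma reset_phase rho N m : rho.+1 %| N -> N <= m.+1 <= N + rho ->
  (m %% rho.+1 == rho) = (m.+1 == N).
Proof.
move=> /dvdnP[u ->] /andP[le_N le_rho].
have [lt_m | le_m] := ltnP m (u * rho.+1).
  have m_eq : m.+1 = u * rho.+1 by lia.
  rewrite m_eq eqxx; case: u m_eq {le_N le_rho lt_m} => [|u] /eqP; first by rewrite mul0n.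
  by rewrite mulSn addSn eqSS => /eqP->; rewrite addnC modnMDl modn_small ?eqxx.
have -> : m = u * rho.+1 + (m - u * rho.+1) by lia.
rewrite modnMDl modn_small; last by lia.
by apply/eqP/eqP; lia.
Qed.

Section Execution.
Variables (V : finType) (e : rel V) (rho M : nat) (S : Type) (op : S -> S -> S).
Hypotheses (e_sym : symmetric e) (e_conn : forall p q : V, connect e p q).
Hypotheses (M_gt2 : 2 < M) (dvd_M : rho.+1 %| M).
Hypotheses (opA : associative op) (opC : commutative op) (opI : idempotent_op op).
Variables (v0 : V -> S) (gam : nat -> conf V S) (ch : nat -> {set V}).
Hypothesis enabled_ch : forall t p, p \in ch t -> enabled M e (cr (gam t)) p.
Hypothesis gam_step : forall t, gam t.+1 = step M rho e op v0 (ch t) (gam t).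
Hypothesis clock_range0 : forall p, cr (gam 0) p < M.
Variables (p0 : V) (lr : nat -> V -> int).
Hypothesis p0_min : forall s, path e p0 s -> (0 <= delay M (cr (gam 0)) p0 s)%R.
Hypothesis lift0 : forall p s, path e p0 s -> last p0 s = p ->
  lr 0 p = (Posz (cr (gam 0) p0) + delay M (cr (gam 0)) p0 s)%R.
Hypothesis liftS : forall t p, lr t.+1 p = (lr t p + Posz (p \in ch t))%R.

Lemma path_from_p0 q : exists2 s, path e p0 s & last p0 s = q.
Proof. by case/connectP: (e_conn p0 q) => s ps ->; exists s. Qed.

(* The lifted clocks are natural numbers, thanks to the choice of p0. *)
Lemma lr_ge0 t q : (0 <= lr t q)%R.
Proof.
elim: t q => [|t IH] q; last by rewrite liftS addr_ge0.
by have [s ps sq] := path_from_p0 q; rewrite (lift0 ps sq) addr_ge0 ?p0_min.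
Qed.

Definition lift (t : nat) (q : V) : nat := `|lr t q|%N.

Lemma liftE t q : lr t q = Posz (lift t q).
Proof. by rewrite /lift gez0_abs ?lr_ge0. Qed.

Lemma lift_succ t q : lift t.+1 q = lift t q + (q \in ch t).
Proof. by apply/eqP; rewrite -eqz_nat PoszD -!liftE liftS. Qed.

Lemma clock_lift t q : cr (gam t) q = lift t q %% M.
Proof.
elim: t q => [|t IH] q.
  have [s ps sq] := path_from_p0 q.
  apply/eqP; rewrite -eqz_nat -modz_nat -liftE (lift0 ps sq) delay_mod ?sq.
    by rewrite modz_small // ltz_nat clock_range0.
  exact: ltnW (ltnW M_gt2).
rewrite gam_step /= lift_succ IH; case: (q \in ch t) => /=.
  by rewrite -addn1 modnDml addn1.
by rewrite addn0.
Qed.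

Lemma lift_mover_neighbor t q x :
    (forall q x, e q x -> lift t x <= (lift t q).+1) ->
    q \in ch t -> e q x ->
  lift t x = lift t q + (cr (gam t) x != cr (gam t) q).
Proof.
move=> near_t q_ch qx; rewrite !clock_lift.
apply: succ_residue => //; rewrite ?near_t // 1?e_sym //.
by move/forallP/(_ x)/implyP/(_ qx): (enabled_ch q_ch); rewrite !clock_lift.
Qed.

Lemma lift_neighbor t q x : e q x -> lift t x <= (lift t q).+1.
Proof.
elim: t q x => [|t IH] q x qx.
  have [s ps sq] := path_from_p0 q.
  have psx : path e p0 (rcons s x) by rewrite rcons_path ps sq.
  rewrite -lez_nat -liftE (lift0 psx (last_rcons _ _ _)) delay_rcons sq addrA.
  by rewrite -(lift0 ps sq) liftE -addn1 PoszD lerD // ominus_le1.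
rewrite !lift_succ; case q_ch: (q \in ch t); case x_ch: (x \in ch t) => /=.
- by rewrite !addn1 ltnS IH.
- by rewrite addn0 addn1 ltnW // ltnS IH.
- rewrite (@lift_mover_neighbor t x q IH x_ch); last by rewrite e_sym.
  by rewrite addn0 addn1 ltnS leq_addr.
- by rewrite !addn0 IH.
Qed.

Lemma lift0_le_diam D q : is_diameter e D -> lift 0 q <= cr (gam 0) p0 + D.
Proof.
case=> /(_ p0 q) /inballP[s [ps sq size_s]] _.
rewrite -lez_nat -liftE (lift0 ps sq) PoszD lerD //.
by rewrite (le_trans (delay_le_size _ _ _ _)) // lez_nat.
Qed.

Lemma phase_lift t q : cr (gam t) q %% rho.+1 = lift t q %% rho.+1.
Proof. by rewrite clock_lift modn_dvdm. Qed.

(* N is a multiple of rho+1 above every initial lifted clock, so that every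
   process performs a reset step (phase rho) on its way from N-1 to N. *)
Section Registers.
Variable N : nat.
Hypotheses (dvd_N : rho.+1 %| N) (lift0_lt : forall q, lift 0 q < N).

Local Notation ball_inf := (@ball_inf V e S op opA opC v0).

Lemma registers_invariant t q : N <= lift t q <= N + rho ->
  Some (cv2 (gam t) q) = ball_inf (lift t q - N) q /\
  Some (cv1 (gam t) q) = ball_inf (lift t q - N).-1 q.
Proof.
elim: t q => [|t IH] q; first by rewrite leqNgt lift0_lt.
rewrite lift_succ gam_step /=.
case: ifP => [q_ch|_]; last by rewrite addn0; exact: IH.
rewrite addn1 => range_q; rewrite phase_lift (reset_phase dvd_N range_q).
case: eqP => [<-|ne_N]; first by rewrite subnn ball_inf0.
have le_N : N <= lift t q by case/andP: range_q => le_N _; lia.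
set j := lift t q - N; rewrite subSn // -/j.
have in_range x : lift t q <= lift t x -> lift t x <= (lift t q).+1 ->
    N <= lift t x <= N + rho.
  case/andP: range_q => _ le_rho le_qx le_xq.
  by rewrite (leq_trans le_N le_qx) (leq_trans le_xq le_rho).
have [v2_q _] := IH q (in_range q (leqnn _) (leqnSn _)).
split => //; rewrite some_foldr_map ball_infS //; congr oAC.
apply: eq_big_seq => x; rewrite mem_enum => qx.
have lift_x := lift_mover_neighbor (lift_neighbor t) q_ch qx.
have /andP[le_qx le_xq] : lift t q <= lift t x <= (lift t q).+1.
  by rewrite lift_x leq_addr -addn1 leq_add2l leq_b1.
have [v2_x v1_x] := IH x (in_range x le_qx le_xq).
case: eqP lift_x v2_x v1_x => _ /= ->.
- by rewrite addn0 => ->.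
- by rewrite addn1 subSn // => _ ->.
Qed.
End Registers.
End Execution.

Theorem mainTheorem6
  (* graph *)
  (V : finType) (e : rel V)
  (e_sym : symmetric e) (e_irr : irreflexive e)
  (e_conn : forall p q : V, connect e p q) (n_ge2 : 2 <= #|V|)
  (D : nat) (HD : is_diameter e D)
  (* parameters: delta = rho.+1 *)
  (rho M : nat) (rho_ge1 : 1 <= rho) (M_ge3 : 3 <= M) (dvd_M : rho.+1 %| M)
  (* the semilattice operation *)
  (S : Type) (op : S -> S -> S)
  (opA : associative op) (opC : commutative op) (opI : idempotent_op op)
  (v0 : V -> S)
  (* the execution, with the daemon's choices *)
  (gam : nat -> conf V S) (ch : nat -> {set V})
  (Hch_nonempty : forall t, ch t != set0)
  (Hch_enabled : forall t p, p \in ch t -> enabled M e (cr (gam t)) p)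
  (Hstep : forall t, gam t.+1 = step M rho e op v0 (ch t) (gam t))
  (Hrange0 : forall p, cr (gam 0%N) p < M)
  (HWU0 : WU0 M e (cr (gam 0%N)))
  (Hfair : forall p t, exists2 t', t <= t' & p \in ch t')
  (* lifting *)
  (p0 : V)
  (Hp0 : forall s, path e p0 s -> (0 <= delay M (cr (gam 0%N)) p0 s)%R)
  (lr : nat -> V -> int)
  (Hlr0 : forall p s, path e p0 s -> last p0 s = p ->
            lr 0 p = (Posz (cr (gam 0%N) p0) + delay M (cr (gam 0%N)) p0 s)%R)
  (HlrS : forall t p, lr t.+1 p = (lr t p + Posz (p \in ch t))%R)
  (* the statement *)
  (U : int)
  (HU : (Posz (cr (gam 0%N) p0) + Posz D + 1 <= U * Posz rho.+1)%R)
  (p : V) (t : nat)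
  (Ht : lr t p = (U * Posz rho.+1 + Posz rho)%R)
  (Ht_min : forall t', (t' < t)%N -> lr t' p <> (U * Posz rho.+1 + Posz rho)%R) :
  Some (cv2 (gam t) p) =
    \big[oAC opA opC/None]_(q | inball e rho p q) Some (v0 q).
Proof.
have liftE := liftE e_conn Hp0 Hlr0 HlrS.
(* U(rho+1) > 0 forces U = u to be a natural number. *)
case: U HU Ht {Ht_min} => [u|u] HU Ht; last first.
  by move: HU; rewrite NegzE mulNr => HU; exfalso; lia.
rewrite -PoszM -!PoszD lez_nat in HU; rewrite -PoszM -PoszD liftE in Ht.
set N := u * rho.+1 in HU Ht.
have lift0_lt q : lift lr 0 q < N.
  by rewrite (leq_trans _ HU) // addn1 ltnS (lift0_le_diam e_conn Hp0 Hlr0 HlrS _ HD).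
have lift_t : lift lr t p = N + rho by case: Ht.
have in_range : N <= lift lr t p <= N + rho by rewrite lift_t leq_addr leqnn.
have [-> _] := registers_invariant e_sym e_conn M_ge3 dvd_M opA opC opI
  Hch_enabled Hstep Hrange0 Hp0 Hlr0 HlrS (dvdn_mull u (dvdnn _)) lift0_lt in_range.
by rewrite lift_t addKn.
Qed.
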